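(* Every $4$-unitrade of cardinality $9$ is equivalent to $P=\{\{1,2,5,6\}, \{1,3,5,6\}, \{2,3,5,6\}, \{1,2,4,6\}, \{1,3,4,6\}, \{2,3,4,6\}, \{1,2,4,5\}, \{1,3,4,5\}, \{2,3,4,5\}\}$ (and $P$ is a $4$-unitrade of cardinality $9$).
   Context: A $k$-unitrade on a finite set $V$ is a set $U$ of $k$-element subsets (blocks) of $V$ such that every $(k-1)$-element subset of $V$ is contained in an even number of blocks of $U$. Two collections $U_1$ of subsets of $V_1$ and $U_2$ of subsets of $V_2$ are equivalent if there is an injection $f:V_1\to V_2$ with $U_2=\{f(u): u\in U_1\}$. *)

From mathcomp Require Import all_boot.
Set Implicit Arguments. Unset Strict Implicit. Unset Printing Implicit Defensive.

Definition unitrade (V : finType) (k : nat) (U : {set {set V}}) : Prop :=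
  (forall B, B \in U -> #|B| = k) /\
  (forall S : {set V}, #|S| = k.-1 -> ~~ odd #|[set B in U | S \subset B]|).

Definition equivalent (V1 V2 : finType) (U1 : {set {set V1}}) (U2 : {set {set V2}}) : Prop :=
  exists f : V1 -> V2, injective f /\ U2 = [set (f @: B) | B : {set V1} in U1].

(* The ground set {1,...,6} is represented by 'I_6, element i being encoded as i-1. *)
Definition pt (i : nat) : 'I_6 := inord i.-1.
Definition blk (a b c d : nat) : {set 'I_6} := [set pt a; pt b; pt c; pt d].

Definition P : {set {set 'I_6}} :=
  [set blk 1 2 5 6; blk 1 3 5 6; blk 2 3 5 6;
       blk 1 2 4 6; blk 1 3 4 6; blk 2 3 4 6;
       blk 1 2 4 5; blk 1 3 4 5; blk 2 3 4 5].

From mathcomp Require Import all_boot.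
Set Implicit Arguments. Unset Strict Implicit. Unset Printing Implicit Defensive.

(* Every point of a 4-unitrade lies in at least 4 blocks, so counting incidences
   shows that a 4-unitrade U with 9 blocks has at most 9 points; relabel them
   in 'I_9 so that {0,1,2,3} is a block.  While some 3-set lies in an odd
   number of the blocks found so far, another block of U contains it, and we
   branch over its fourth point.  A branch dies when that block was already
   found, or when the 4 three-subsets of each of the remaining blocks cannot
   account for all odd 3-sets.  Once no 3-set is odd, the blocks found form a
   unitrade and so does the rest of U; since a nonempty 4-unitrade has at least
   5 blocks, the blocks found are all of U, and it remains to check that they
   form a copy of P.  The finitely many branches are explored by computation. *)

(** * Unitrades *)

Section Unitrade.
Variables (V : finType) (k : nat).
Implicit Types (U C : {set {set V}}) (A B : {set V}).

Lemma unitrade_partner U B y : unitrade k U -> B \in U -> y \in B ->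
  exists2 B', B' \in U & (B :\ y \subset B') && (y \notin B').
Proof.
move=> [Uk Ueven] BU yB.
have cardBy : #|B :\ y| = k.-1 by rewrite -(Uk _ BU) (cardsD1 y B) yB.
set X := [set B' in U | B :\ y \subset B'].
have BX : B \in X by rewrite inE BU subD1set.
have /set0Pn [B' /setD1P [B'B]] : X :\ B != set0.
  apply: (contra _ (Ueven _ cardBy)) => /eqP XB.
  rewrite -/X (_ : X = [set B]) ?cards1 //.
  by apply/eqP; rewrite eqEsubset sub1set BX -setD_eq0 XB eqxx.
move=> /setIdP [B'U ByB']; exists B' => //; rewrite ByB'.
apply: contra B'B => yB'; rewrite eq_sym eqEcard (Uk _ BU) (Uk _ B'U) leqnn andbT.
by rewrite -(setD1K yB) subUset sub1set yB'.
Qed.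

Lemma unitrade_card_containing U A B : unitrade k U -> B \in U -> A \subset B ->
  #|B :\: A| < #|[set B' in U | A \subset B']|.
Proof.
move=> HU BU AB.
pose partner y := odflt B [pick B' in U | (B :\ y \subset B') && (y \notin B')].
have partnerP y : y \in B ->
    [/\ partner y \in U, B :\ y \subset partner y & y \notin partner y].
  move=> yB; rewrite /partner; case: pickP => [B' /andP [-> /andP [-> ->]] // | none].
  have [B' B'U /andP [ByB' yB']] := unitrade_partner HU BU yB.
  by have := none B'; rewrite B'U ByB' yB'.
have partner_inj : {in B :\: A &, injective partner}.
  move=> y z /setDP [yB _] /setDP [zB _] eq_yz; apply/eqP; apply: contraT => yz.
  have [_ _ /negP []] := partnerP y yB; rewrite eq_yz.
  have [_ zP _] := partnerP z zB; apply: (subsetP zP); by rewrite !inE yz yB.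
(* The partners of the points of B :\: A are distinct blocks through A other than B. *)
set X := [set B' in U | A \subset B'].
rewrite (cardsD1 B X) inE BU AB add1n ltnS -(card_in_imset partner_inj).
apply/subset_leq_card/subsetP => _ /imsetP [y /setDP [yB yA] ->].
have [yU /(subset_trans _) ByP yP] := partnerP y yB.
rewrite !inE yU ByP ?andbT; last by rewrite subsetD1 AB.
by apply: (contraNneq _ yP) => ->.
Qed.

Lemma unitrade_card_gt U : unitrade k U -> U != set0 -> k < #|U|.
Proof.
move=> HU /set0Pn [B BU].
have := unitrade_card_containing HU BU (sub0set B).
suff -> : [set B' in U | set0 \subset B'] = U by rewrite setD0 HU.1.
by apply/setP => B'; rewrite inE sub0set andbT.
Qed.

Lemma unitrade_degree_ge U B v : unitrade k U -> B \in U -> v \in B ->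
  k <= #|[set B' in U | v \in B']|.
Proof.
move=> HU BU vB.
have k_gt0 : 0 < k by rewrite -(HU.1 _ BU) card_gt0; apply/set0Pn; exists v.
have := unitrade_card_containing HU BU (_ : [set v] \subset B).
rewrite sub1set vB -(prednK k_gt0) -(HU.1 _ BU) (cardsD1 v B) vB => /(_ isT).
suff -> : [set B' in U | [set v] \subset B'] = [set B' in U | v \in B'] by [].
by apply/setP => B'; rewrite !inE sub1set.
Qed.

Lemma unitrade_setD U C : unitrade k U -> unitrade k C -> C \subset U ->
  unitrade k (U :\: C).
Proof.
move=> [Uk Ueven] [_ Ceven] CU; split=> [B /setDP [BU _] | S cardS]; first exact: Uk.
have -> : [set B in U :\: C | S \subset B] = [set B in U | S \subset B] :\: C.
  by apply/setP => B; rewrite !inE andbA.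
have UC : [set B in U | S \subset B] :&: C = [set B in C | S \subset B].
  apply/setP => B; rewrite !inE andbC andbA.
  by case: (boolP (B \in C)) => // BC; rewrite (subsetP CU _ BC).
by have := Ueven _ cardS; rewrite -(cardsID C) UC oddD (negPf (Ceven _ cardS)).
Qed.

Lemma sum_degree_cover U :
  \sum_(v in cover U) #|[set B in U | v \in B]| = \sum_(B in U) #|B|.
Proof.
under eq_bigr do rewrite -sum1_card big_mkcond.
rewrite exchange_big [RHS]big_mkcond; apply: eq_bigr => B _.
under eq_bigr do rewrite inE.
case: (boolP (B \in U)) => BU /=; last by rewrite big1.
rewrite -big_mkcondr -sum1_card; apply: eq_bigl => v /=.
by apply: andb_idl => vB; apply/bigcupP; exists B.
Qed.

Lemma card_cover_unitrade U : 0 < k -> unitrade k U -> #|cover U| <= #|U|.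
Proof.
move=> k_gt0 HU; rewrite -(leq_pmul2r k_gt0) -!sum_nat_const.
rewrite -(eq_bigr _ (fun B => HU.1 B)) -sum_degree_cover.
by apply: leq_sum => v /bigcupP [B BU vB]; apply: unitrade_degree_ge HU BU vB.
Qed.

End Unitrade.

Lemma leq_card_bigcup (I T : finType) (A : {pred I}) (F : I -> {set T}) :
  #|\bigcup_(i in A) F i| <= \sum_(i in A) #|F i|.
Proof.
elim/big_ind2: _ => [| m X p Y Xm Yp | //]; first by rewrite cards0.
by rewrite (leq_trans (leq_card_setU X Y)) ?leq_add.
Qed.

(** * Images under maps injective on the points *)

Section InjectiveOn.
Variables (V W : finType) (f : V -> W) (D : {set V}).
Hypothesis injf : {in D &, injective f}.
Implicit Types (X Y : {set V}) (U : {set {set V}}).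

Lemma imset_subset_on X Y : X \subset D -> Y \subset D ->
  (f @: X \subset f @: Y) = (X \subset Y).
Proof.
move=> XD YD; apply/idP/idP => [/subsetP fXY | /imsetS //].
apply/subsetP => x xX; have /imsetP [y yY fxy] := fXY _ (imset_f f xX).
by rewrite (injf (subsetP XD _ xX) (subsetP YD _ yY) fxy).
Qed.

Lemma imset_inj_on X Y : X \subset D -> Y \subset D -> f @: X = f @: Y -> X = Y.
Proof.
move=> XD YD fXY; apply/eqP; rewrite eqEsubset.
by rewrite -(imset_subset_on XD YD) -(imset_subset_on YD XD) fXY subxx.
Qed.

Lemma card_imset_on X : X \subset D -> #|f @: X| = #|X|.
Proof.
by move=> XD; apply: card_in_imset => x y /(subsetP XD) xD /(subsetP XD); apply: injf.
Qed.

Lemma imset_family_inj_on U : cover U \subset D ->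
  {in U &, injective (fun B : {set V} => f @: B)}.
Proof.
move=> UD B C BU CU; apply: imset_inj_on; apply: subset_trans UD; exact: bigcup_sup.
Qed.

Lemma unitrade_imset k U : cover U \subset D -> unitrade k U ->
  unitrade k [set f @: B | B : {set V} in U].
Proof.
move=> UD [Uk Ueven]; have BD B : B \in U -> B \subset D.
  by move=> BU; apply: subset_trans UD; apply: bigcup_sup.
split=> [_ /imsetP [B BU ->] | S cardS]; first by rewrite card_imset_on ?BD ?Uk.
have [SfD | SnfD] := boolP (S \subset f @: D); last first.
  suff -> : [set B in [set f @: B | B : {set V} in U] | S \subset B] = set0.
    by rewrite cards0.
  apply/setP => B2; rewrite !inE; apply/andP => -[/imsetP [B BU ->] SfB].
  by case/negP: SnfD; rewrite (subset_trans SfB) ?imsetS ?BD.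
pose T := D :&: f @^-1: S.
have fT : f @: T = S.
  apply/setP => y; apply/imsetP/idP => [[x] | Sy].
    by rewrite !inE => /andP [_ Sfx] ->.
  by have /imsetP [x Dx fx] := subsetP SfD _ Sy; exists x; rewrite // !inE Dx -fx.
have TD : T \subset D := subsetIl _ _.
have -> : [set B in [set f @: B | B : {set V} in U] | S \subset B] =
          [set f @: B | B : {set V} in [set B in U | T \subset B]].
  apply/setP => B2; apply/idP/imsetP => [| [B /setIdP [BU TB] ->]].
    rewrite inE => /andP [/imsetP [B BU ->]].
    by rewrite -fT (imset_subset_on TD (BD _ BU)) => TB; exists B; rewrite // inE BU.
  by rewrite inE imset_f //= -fT (imset_subset_on TD (BD _ BU)).
rewrite card_in_imset; last first.
  by move=> B C /setIdP [BU _] /setIdP [CU _]; apply: (imset_family_inj_on UD).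
by apply: Ueven; rewrite -(card_imset_on TD) fT.
Qed.

End InjectiveOn.

Lemma relabel_prefix (V : finType) n (W B : {set V}) :
  B \subset W -> #|W| <= n.+1 ->
  exists e : V -> 'I_n.+1,
    {in W &, injective e} /\ e @: B = [set i : 'I_n.+1 | i < #|B|].
Proof.
move=> BW Wn; pose s := enum B ++ enum (W :\: B).
have mem_s v : (v \in s) = (v \in W).
  by rewrite mem_cat !mem_enum inE orb_andr orbN /= orb_idl // => /(subsetP BW).
have uniq_s : uniq s.
  rewrite cat_uniq !enum_uniq andbT /=.
  by apply/hasPn => v; rewrite !mem_enum inE => /andP [].
have size_s : size s = #|W|.
  by rewrite size_cat -!cardE -(cardsID B W) (setIidPr BW).
pose e v : 'I_n.+1 := inord (index v s).
have eE v : v \in W -> e v = index v s :> nat.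
  by move=> vW; rewrite inordK // (leq_trans _ Wn) // -size_s index_mem mem_s.
exists e; split.
  move=> v w vW wW /(congr1 (@nat_of_ord _)); rewrite !eE // => /(congr1 (nth v s)).
  by rewrite !nth_index ?mem_s.
apply/setP => i; rewrite inE; apply/imsetP/idP => [[v vB ->] | iB].
  by rewrite eE ?(subsetP BW) // index_cat mem_enum vB cardE index_mem mem_enum.
pose v := enum_val (Ordinal iB); have vB : v \in B := enum_valP _.
exists v => //; apply: ord_inj; rewrite eE ?(subsetP BW) // index_cat mem_enum vB.
by rewrite /v (enum_val_nth v) index_uniq ?enum_uniq //= -cardE.
Qed.

Lemma equivalent_pullback (V0 V W : finType) (U0 : {set {set V0}})
    (U : {set {set V}}) (e : V -> W) :
  cover U0 = [set: V0] -> {in cover U &, injective e} ->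
  equivalent U0 [set e @: B | B : {set V} in U] -> equivalent U0 U.
Proof.
move=> U0T einj [f [finj eUfU0]].
have BU_cover B : B \in U -> B \subset cover U by apply: bigcup_sup.
have f_in_eU x : exists v, (v \in cover U) && (e v == f x).
  have /bigcupP [B0 B0U0 xB0] : x \in cover U0 by rewrite U0T inE.
  have /imsetP [B BU efB] : f @: B0 \in [set e @: B | B : {set V} in U].
    by rewrite eUfU0 imset_f.
  have /imsetP [v vB fxv] : f x \in e @: B by rewrite -efB imset_f.
  by exists v; rewrite fxv eqxx andbT (subsetP (BU_cover _ BU)).
pose h x := xchoose (f_in_eU x).
have /all_and2 [h_cover ehf] : forall x, h x \in cover U /\ e (h x) = f x.
  by move=> x; have /andP [? /eqP ?] := xchooseP (f_in_eU x).
have hB0_cover (B0 : {set V0}) : h @: B0 \subset cover U.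
  by apply/subsetP => _ /imsetP [x _ ->]; apply: h_cover.
have ehB0 (B0 : {set V0}) : e @: (h @: B0) = f @: B0.
  by rewrite -imset_comp; apply: eq_imset.
exists h; split=> [x y /(congr1 e) | ]; first by rewrite !ehf => /finj.
apply/setP => B; apply/idP/imsetP => [BU | [B0 B0U0 ->]].
  have /imsetP [B0 B0U0 eBfB0] : e @: B \in [set f @: B0 | B0 : {set V0} in U0].
    by rewrite -eUfU0 imset_f.
  exists B0 => //; apply: (imset_inj_on einj (BU_cover _ BU) (hB0_cover B0)).
  by rewrite ehB0.
have /imsetP [B1 B1U fB0eB1] : f @: B0 \in [set e @: B | B : {set V} in U].
  by rewrite eUfU0 imset_f.
by rewrite (imset_inj_on einj (hB0_cover B0) (BU_cover _ B1U)) ?ehB0.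
Qed.

(** * Blocks coded as sorted lists of naturals *)

Definition incl (t s : seq nat) := all (fun x => x \in s) t.
Definition degree (ch : seq (seq nat)) (t : seq nat) := count (incl t) ch.
Definition facets (s : seq nat) := [seq rem x s | x <- s].
Definition odd_facets (ch : seq (seq nat)) :=
  undup [seq t <- flatten (map facets ch) | odd (degree ch t)].

Section Codes.
Variable n : nat.
Implicit Types (s t : seq nat) (ch : seq (seq nat)).

Definition oset s : {set 'I_n} := [set i : 'I_n | val i \in s].
Definition osets ch : {set {set 'I_n}} := [set B in map oset ch].
Definition code s := sorted ltn s && all (fun x => x < n) s.

Lemma code_uniq s : code s -> uniq s.
Proof. by case/andP; rewrite ltn_sorted_uniq_leq => /andP []. Qed.

Lemma mem_oset_ord s x (xn : x < n) : (Ordinal xn \in oset s) = (x \in s).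
Proof. by rewrite inE. Qed.

Lemma card_oset s : uniq s -> all (fun x => x < n) s -> #|oset s| = size s.
Proof.
elim: s => [|x s IHs] /=.
  by move=> _ _; apply/eqP; rewrite cards_eq0; apply/eqP/setP => i; rewrite inE.
case/andP => xs uniq_s /andP [xn sn].
have -> : oset (x :: s) = Ordinal xn |: oset s by apply/setP => i; rewrite !inE -val_eqE.
by rewrite cardsU1 mem_oset_ord xs IHs.
Qed.

Lemma subset_oset t s : all (fun x => x < n) t -> (oset t \subset oset s) = incl t s.
Proof.
move=> /allP tn; apply/subsetP/allP => [ts x xt | ts i].
  by have := ts (Ordinal (tn x xt)); rewrite !mem_oset_ord; apply.
by rewrite !inE; apply: ts.
Qed.

Lemma oset_inj s t : code s -> code t -> oset s = oset t -> s = t.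
Proof.
move=> /andP [ss /allP sn] /andP [st /allP tn] E.
apply: (irr_sorted_eq ltn_trans ltnn ss st) => x; apply/idP/idP => [xs | xt].
  by rewrite -(mem_oset_ord _ (sn x xs)) -E mem_oset_ord.
by rewrite -(mem_oset_ord _ (tn x xt)) E mem_oset_ord.
Qed.

Lemma oset_rem s (y : 'I_n) : uniq s -> oset (rem (val y) s) = oset s :\ y.
Proof.
by move=> uniq_s; apply/setP => i; rewrite !inE (mem_rem_uniq _ uniq_s) inE val_eqE.
Qed.

Lemma oset_sort s : oset (sort leq s) = oset s.
Proof. by apply/setP => i; rewrite !inE mem_sort. Qed.

Lemma code_sort s : uniq s -> all (fun x => x < n) s -> code (sort leq s).
Proof.
move=> uniq_s sn; rewrite /code ltn_sorted_uniq_leq sort_uniq uniq_s.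
by rewrite sort_sorted ?all_sort //; apply: leq_total.
Qed.

Lemma uniq_map_oset ch : all code ch -> uniq ch -> uniq (map oset ch).
Proof.
by move=> /allP chc; rewrite map_inj_in_uniq // => s t /chc sc /chc tc; apply: oset_inj.
Qed.

Lemma card_osets ch : uniq (map oset ch) -> #|osets ch| = size ch.
Proof. by move=> uniq_ch; rewrite cardsE (card_uniqP uniq_ch) size_map. Qed.

Lemma card_osets_containing ch t : uniq (map oset ch) -> all (fun x => x < n) t ->
  #|[set B in osets ch | oset t \subset B]| = degree ch t.
Proof.
move=> uniq_ch tn; have -> : [set B in osets ch | oset t \subset B] =
    [set B in filter (fun B : {set 'I_n} => oset t \subset B) (map oset ch)].
  by apply/setP => B; rewrite !inE mem_filter andbC.
rewrite cardsE (card_uniqP (filter_uniq _ uniq_ch)) size_filter count_map.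
by apply: eq_count => s; rewrite /= subset_oset.
Qed.

Lemma code_rem s x : code s -> code (rem x s).
Proof.
case/andP => ss /allP sn; have sub_rem := rem_subseq x s.
rewrite /code (subseq_sorted ltn_trans sub_rem ss).
by apply/allP => y /(mem_subseq sub_rem); apply: sn.
Qed.

Lemma mem_odd_facets k ch t : all code ch -> {in ch, forall s, size s = k} ->
  t \in odd_facets ch -> [/\ code t, size t = k.-1 & odd (degree ch t)].
Proof.
move=> /allP chc chk; rewrite mem_undup mem_filter.
case/andP => odd_t /flattenP [_ /mapP [s sch ->] /mapP [x xs Et]]; subst t.
by split; [exact: code_rem (chc _ sch) | rewrite size_rem // chk | ].
Qed.

Lemma unitrade_osets k ch : 0 < k -> all code ch -> uniq ch ->
  {in ch, forall s, size s = k} -> odd_facets ch = [::] -> unitrade k (osets ch).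
Proof.
move=> k_gt0 /allP chc uniq_ch chk no_odd.
have uniq_map : uniq (map oset ch) by apply: uniq_map_oset => //; apply/allP.
have card_s s : s \in ch -> #|oset s| = k.
  by move=> sch; have /andP [_ sn] := chc s sch; rewrite card_oset ?code_uniq ?chc ?chk.
split=> [B | S cardS]; first by rewrite inE => /mapP [s sch ->]; apply: card_s.
apply: contraT => /negbNE odd_S.
have /set0Pn [B /setIdP [+ Ss]] : [set B in osets ch | S \subset B] != set0.
  by apply: contraTneq odd_S => ->; rewrite cards0.
rewrite inE => /mapP [s sch sB]; subst B.
have /set0Pn [y /setDP [ys yS]] : oset s :\: S != set0.
  by rewrite -card_gt0 cardsD (setIidPr Ss) card_s // cardS subn_gt0 ltn_predL.
have SE : S = oset s :\ y.
  have cardSy : #|oset s :\ y| = k.-1.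
    by rewrite -(card_s s sch) (cardsD1 y (oset s)) ys.
  by apply/eqP; rewrite eqEcard subsetD1 Ss yS cardS cardSy leqnn.
have /andP [_ tn] : code (rem (val y) s) by apply: code_rem; apply: chc.
have : rem (val y) s \in odd_facets ch.
  rewrite mem_undup mem_filter -(card_osets_containing uniq_map tn).
  rewrite oset_rem ?code_uniq ?chc // -SE odd_S /=.
  by apply/flattenP; exists (facets s); apply: map_f; rewrite inE in ys.
by rewrite no_odd.
Qed.

End Codes.

Arguments oset : clear implicits.
Arguments osets : clear implicits.

(** * The unitrade P and the search *)

Definition P_code : seq (seq nat) :=
  [:: [:: 0; 1; 4; 5]; [:: 0; 2; 4; 5]; [:: 1; 2; 4; 5];
      [:: 0; 1; 3; 5]; [:: 0; 2; 3; 5]; [:: 1; 2; 3; 5];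
      [:: 0; 1; 3; 4]; [:: 0; 2; 3; 4]; [:: 1; 2; 3; 4]].

Lemma blk_oset a b c d : a.-1 < 6 -> b.-1 < 6 -> c.-1 < 6 -> d.-1 < 6 ->
  blk a b c d = oset 6 [:: a.-1; b.-1; c.-1; d.-1].
Proof.
by move=> *; apply/setP => i; rewrite /blk /pt !inE -!val_eqE /= !inordK // -!orbA.
Qed.

Lemma P_osets : P = osets 6 P_code.
Proof. by rewrite /P !blk_oset //; apply/setP => B; rewrite !inE -!orbA. Qed.

Lemma P_unitrade : unitrade 4 P.
Proof.
have /allP size4 : all (fun s => size s == 4) P_code by [].
rewrite P_osets; apply: (unitrade_osets _ _ _ (fun s sP => eqP (size4 s sP))) => //.
Qed.

Lemma card_P : #|P| = 9.
Proof. by rewrite P_osets card_osets // uniq_map_oset. Qed.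

Lemma cover_P : cover P = [set: 'I_6].
Proof.
have /allP covered : all (fun x => has (fun s => x \in s) P_code) (iota 0 6) by [].
apply/setP => i; rewrite inE P_osets; apply/bigcupP.
have /hasP [s sP si] : has (fun s => val i \in s) P_code.
  by rewrite covered // mem_iota ltn_ord.
by exists (oset 6 s); rewrite inE ?map_f.
Qed.

(* In a copy of P with sides {a1,a2,a3} and {b1,b2,b3}, deleting two points
   leaves a block iff they lie on different sides: [far] is the side avoiding
   the least point w0, and [sides] lists the side of w0 first, as in P_code. *)
Definition sides (ch : seq (seq nat)) : seq nat :=
  let W := sort leq (undup (flatten ch)) in
  let w0 := head 0 W in
  let far := [seq w <- W | [seq z <- W | (z != w0) && (z != w)] \in ch] in
  [seq w <- W | w \notin far] ++ far.

Definition matches_P (ch : seq (seq nat)) :=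
  let fs := sides ch in
  [&& size fs == 6, uniq fs, all (fun x => x < 9) fs &
      all (fun s => sort leq (map (nth 0 fs) s) \in ch) P_code].

Lemma matches_P_equivalent ch : uniq (map (oset 9) ch) -> size ch = 9 ->
  matches_P ch -> equivalent P (osets 9 ch).
Proof.
rewrite /matches_P; set fs := sides ch.
move=> uniq_ch size_ch /and4P [/eqP size_fs uniq_fs /allP fs9 /allP fs_ch].
pose f (i : 'I_6) : 'I_9 := inord (nth 0 fs i).
have fE i : f i = nth 0 fs i :> nat by rewrite inordK // fs9 // mem_nth // size_fs.
have f_inj : injective f.
  move=> i j /(congr1 (@nat_of_ord _)); rewrite !fE => /eqP.
  by rewrite nth_uniq ?size_fs // => /eqP /ord_inj.
have f_oset s : all (fun x => x < 6) s -> f @: oset 6 s = oset 9 (map (nth 0 fs) s).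
  move=> /allP s6; apply/setP => j; apply/imsetP/idP => [[i] | ].
    by rewrite !inE => si ->; rewrite /= fE map_f.
  rewrite inE => /mapP [x xs jx]; exists (Ordinal (s6 x xs)); rewrite ?inE //.
  by apply: ord_inj; rewrite fE.
exists f; split=> //; apply/eqP; rewrite eq_sym eqEcard card_osets // size_ch.
rewrite card_in_imset ?card_P; last by move=> B C _ _; apply: imset_inj.
rewrite leqnn andbT; apply/subsetP => C /imsetP [B]; rewrite P_osets inE.
case/mapP => s sP -> ->; have /andP [_ s6] : code 6 s by move: s sP; apply/allP.
by rewrite f_oset // -oset_sort inE map_f ?fs_ch.
Qed.

Fixpoint search (fuel : nat) (ch : seq (seq nat)) : bool :=
  if fuel is fuel'.+1 then
    let o := odd_facets ch in
    if o is t :: _ then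
      if 4 * (9 - size ch) < size o then true else
      all (fun x => if (x \in t) || has (incl (x :: t)) ch then true
                    else search fuel' (sort leq (x :: t) :: ch)) (iota 0 9)
    else (size ch != 9) || matches_P ch
  else false.

Lemma search_root : search 10 [:: [:: 0; 1; 2; 3]].
Proof. by vm_compute. Qed.

Section Search.
Variable U : {set {set 'I_9}}.
Hypotheses (U_unitrade : unitrade 4 U) (card_U : #|U| = 9).

Definition partial ch :=
  [/\ all (code 9) ch, uniq ch, ch != [::] & osets 9 ch \subset U].

Lemma partial_size ch : partial ch -> {in ch, forall s, size s = 4}.
Proof.
case=> /allP chc _ _ /subsetP chU s sch; have /andP [_ s9] := chc s sch.
rewrite -(@card_oset 9) ?(code_uniq (chc s sch)) //.
by apply: U_unitrade.1; apply: chU; rewrite inE map_f.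
Qed.

Lemma partial_card ch : partial ch -> #|osets 9 ch| = size ch.
Proof. by case=> chc uniq_ch _ _; rewrite card_osets ?uniq_map_oset. Qed.

Lemma partial_complete ch : partial ch -> odd_facets ch = [::] -> osets 9 ch = U.
Proof.
move=> pch no_odd; have [chc uniq_ch ch0 chU] := pch.
have C_unitrade :=
  unitrade_osets (isT : 0 < 4) chc uniq_ch (partial_size pch) no_odd.
have C0 : osets 9 ch != set0.
  by case: ch ch0 {pch chc uniq_ch chU C_unitrade no_odd} => // s ch _; apply/set0Pn;
    exists (oset 9 s); rewrite inE mem_head.
apply/eqP; rewrite eqEsubset chU -setD_eq0; apply: contraT => D0.
have := leq_add (unitrade_card_gt C_unitrade C0)
                (unitrade_card_gt (unitrade_setD U_unitrade C_unitrade chU) D0).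
by have := cardsID (osets 9 ch) U; rewrite (setIidPr chU) card_U => ->.
Qed.

Lemma partial_missing ch t : partial ch -> t \in odd_facets ch ->
  exists2 B, B \in U :\: osets 9 ch & oset 9 t \subset B.
Proof.
move=> pch tch; have [chc uniq_ch _ chU] := pch.
have [tc size_t odd_t] := mem_odd_facets chc (partial_size pch) tch.
have /andP [_ t9] := tc.
apply/exists_inP; apply: contraT; rewrite negb_exists_in => /forall_inP none.
have := U_unitrade.2 (oset 9 t) (etrans (card_oset (code_uniq tc) t9) size_t).
suff -> : [set B in U | oset 9 t \subset B] = [set B in osets 9 ch | oset 9 t \subset B].
  by rewrite card_osets_containing ?uniq_map_oset ?odd_t.
apply/setP => B; rewrite !inE; apply/andP/andP => [[BU tB] | [BC tB]]; split=> //.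
  by apply: contraT => BC; have := none B; rewrite !inE BC BU tB => /(_ isT).
by have := subsetP chU B; rewrite !inE; apply.
Qed.

Lemma partial_odd_facets_bound ch : partial ch ->
  size (odd_facets ch) <= 4 * (9 - size ch).
Proof.
move=> pch; have [chc uniq_ch _ chU] := pch.
have facetP t := mem_odd_facets (t := t) chc (partial_size pch).
have uniq_odd : uniq (map (oset 9) (odd_facets ch)).
  by apply: uniq_map_oset (undup_uniq _); apply/allP => t /facetP [].
set D := U :\: osets 9 ch.
have odd_sub : [set S in map (oset 9) (odd_facets ch)] \subset
               \bigcup_(B in D) [set S : {set 'I_9} | S \subset B & #|S| == 3].
  apply/subsetP => S; rewrite inE => /mapP [t tch ->].
  have [tc size_t _] := facetP _ tch; have /andP [_ t9] := tc.
  have [B BD tB] := partial_missing pch tch.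
  by apply/bigcupP; exists B; rewrite // inE tB (card_oset (code_uniq tc) t9) size_t.
have := leq_trans (subset_leq_card odd_sub) (leq_card_bigcup _ _).
rewrite cardsE (card_uniqP uniq_odd) size_map (eq_bigr (fun=> 4)) ?sum_nat_const.
  by rewrite cardsD (setIidPr chU) card_U (partial_card pch) mulnC.
by move=> B /setDP [BU _]; rewrite cards_draws (U_unitrade.1 _ BU).
Qed.

Lemma partial_cons ch s : partial ch -> code 9 s -> oset 9 s \in U :\: osets 9 ch ->
  partial (s :: ch).
Proof.
case=> chc uniq_ch _ chU sc /setDP [sU sC]; split=> //=; first by rewrite sc.
  by rewrite uniq_ch andbT; apply: contra sC => sch; rewrite inE map_f.
apply/subsetP => B; rewrite inE /= in_cons => /orP [/eqP -> // | BC].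
by apply: (subsetP chU); rewrite inE.
Qed.

Lemma partial_extension ch t : partial ch -> t \in odd_facets ch ->
  exists x, [/\ x < 9, x \notin t, ~~ has (incl (x :: t)) ch &
                partial (sort leq (x :: t) :: ch)].
Proof.
move=> pch tch; have [chc uniq_ch _ chU] := pch.
have [tc size_t _] := mem_odd_facets chc (partial_size pch) tch.
have /andP [_ t9] := tc; have card_t := card_oset (code_uniq tc) t9.
have [B /setDP [BU BC] tB] := partial_missing pch tch.
have /set0Pn [y /setDP [yB yt]] : B :\: oset 9 t != set0.
  by rewrite -card_gt0 cardsD (setIidPr tB) (U_unitrade.1 _ BU) card_t size_t.
have yt' : val y \notin t by rewrite inE in yt.
have BE : B = oset 9 (val y :: t).
  have -> : oset 9 (val y :: t) = y |: oset 9 t.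
    by apply/setP => i; rewrite !inE val_eqE.
  apply/eqP; rewrite eq_sym eqEcard subUset sub1set yB tB cardsU1 yt card_t size_t.
  by rewrite (U_unitrade.1 _ BU).
exists (val y); rewrite ltn_ord yt'; split=> //; last first.
  apply: partial_cons pch _ _; last by rewrite oset_sort -BE inE BU BC.
  by apply: code_sort; rewrite /= ?yt' ?ltn_ord ?(code_uniq tc).
apply/hasPn => s sch; apply: contra BC => yts; rewrite inE.
have /andP [_ s9] := allP chc s sch; have sc := allP chc s sch.
have yt9 : all (fun x => x < 9) (val y :: t) by rewrite /= ltn_ord.
rewrite BE (_ : oset 9 (val y :: t) = oset 9 s) ?map_f //.
apply/eqP; rewrite eqEcard subset_oset // yts -BE (U_unitrade.1 _ BU).
by rewrite (card_oset (code_uniq sc) s9) (partial_size pch sch).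
Qed.

Lemma search_sound fuel ch : partial ch -> search fuel ch -> equivalent P U.
Proof.
elim: fuel ch => [// | fuel IH] ch pch; cbn [search].
case E : (odd_facets ch) => [| t o].
  rewrite -(partial_card pch) (partial_complete pch E) card_U eqxx /=.
  move/matches_P_equivalent; rewrite (partial_complete pch E); apply.
    by have [chc uniq_ch _ _] := pch; apply: uniq_map_oset.
  by rewrite -(partial_card pch) (partial_complete pch E).
rewrite -E ltnNge partial_odd_facets_bound // => /allP search_t.
have tch : t \in odd_facets ch by rewrite E mem_head.
have [x [x9 xt x_ch pch']] := partial_extension pch tch.
apply: IH pch' _; have := search_t x.
by rewrite mem_iota x9 (negPf xt) (negPf x_ch); apply.
Qed.

Lemma search_root_sound : [set i : 'I_9 | i < 4] \in U -> equivalent P U.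
Proof.
move=> rootU; apply: (search_sound _ search_root); split=> //.
apply/subsetP => B; rewrite inE mem_seq1 => /eqP ->.
rewrite (_ : oset 9 _ = [set i : 'I_9 | i < 4]) //.
by apply/setP => i; rewrite !inE; case: i => [[|[|[|[|m]]]] ?].
Qed.

End Search.

Theorem proposition13 :
  (unitrade 4 P /\ #|P| = 9) /\
  (forall (V : finType) (U : {set {set V}}),
      unitrade 4 U -> #|U| = 9 -> equivalent P U).
Proof.
split; first by split; [exact: P_unitrade | exact: card_P].
move=> V U U_unitrade card_U.
have /set0Pn [B0 B0U] : U != set0 by rewrite -card_gt0 card_U.
have cover_U : #|cover U| <= 9 by rewrite -card_U (card_cover_unitrade _ U_unitrade).
have [e [e_inj eB0]] := relabel_prefix (bigcup_sup B0 B0U) cover_U.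
apply: (equivalent_pullback cover_P e_inj); apply: search_root_sound.
- exact: (unitrade_imset e_inj (subxx _) U_unitrade).
- by rewrite (card_in_imset (imset_family_inj_on e_inj (subxx _))).
- by rewrite (U_unitrade.1 _ B0U) in eB0; rewrite -eB0 imset_f.
Qed.
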